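(* Let $A\subseteq B$ be commutative semirings, $S=A[x_1,\dots,x_n]$, and $\rho$ a congruence on $B$ with $\rho\neq B\times B$. Then: (1) $Z_\rho(\{(0,1)\})(B)=\emptyset$ and $Z_\rho(\{(f,f)\})(B)=B^n$ for all $f\in S$; (2) for non-empty $T_1,T_2\subseteq S\times S$, $Z_\rho(T_1)(B)\cup Z_\rho(T_2)(B)\subseteq Z_\rho(T_1\ast T_2)(B)$; (3) the intersection of any family of $\rho$-algebraic varieties is a $\rho$-algebraic variety.
   Context: Semirings are commutative with $0$ and $1\neq0$, $0a=0$; congruences are equivalence relations compatible with $+,\cdot$. For non-empty $T\subseteq S\times S$, $Z_\rho(T)(B)=\{P\in B^n:(f(P),g(P))\in\rho\ \forall(f,g)\in T\}$; a $\rho$-algebraic variety is a set of this form. The twisted product is $(f_1,g_1)\ast(f_2,g_2)=(f_1f_2+g_1g_2,\ f_1g_2+g_1f_2)$ and $T_1\ast T_2=\{t_1\ast t_2:t_1\in T_1,t_2\in T_2\}$. *)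

From HB Require Import structures.
From mathcomp Require Import all_boot all_order all_algebra.
Set Implicit Arguments. Unset Strict Implicit. Unset Printing Implicit Defensive.
Import GRing.Theory.
Local Open Scope ring_scope.

(* The polynomial semiring A[x_0, ..., x_(k-1)], built as the iterated
   univariate polynomial semiring A[x_0][x_1]...[x_(k-1)] (MathComp's {poly R}
   is available over any (commutative, non-trivial) semiring). *)
Fixpoint mpolyS (A : comNzSemiRingType) (k : nat) : comNzSemiRingType :=
  match k with
  | 0 => A
  | k'.+1 => {poly mpolyS A k'}
  end.

Fixpoint evalN (A B : comNzSemiRingType) (iota : A -> B) (k : nat)
  : mpolyS A k -> (nat -> B) -> B :=
  match k return mpolyS A k -> (nat -> B) -> B with
  | 0 => fun a _ => iota a
  | k'.+1 => fun p P =>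
      \sum_(i < size (p : {poly mpolyS A k'}))
        evalN iota (p : {poly mpolyS A k'})`_i P * P k' ^+ i
  end.

Definition mpeval (A B : comNzSemiRingType) (iota : A -> B) (n : nat)
  (f : mpolyS A n) (P : 'I_n -> B) : B :=
  evalN iota f (fun i : nat =>
    match @insub nat (fun j : nat => (j < n)%N) 'I_n i with
    | Some j => P j | None => 0 end).

Definition congruence (B : comNzSemiRingType) (rho : B -> B -> Prop) : Prop :=
  [/\ (forall a, rho a a),
      (forall a b, rho a b -> rho b a),
      (forall a b c, rho a b -> rho b c -> rho a c),
      (forall a b c d, rho a b -> rho c d -> rho (a + c) (b + d)) &
      (forall a b c d, rho a b -> rho c d -> rho (a * c) (b * d))].

Definition Zrho (A B : comNzSemiRingType) (iota : A -> B) (n : nat)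
  (rho : B -> B -> Prop) (T : mpolyS A n * mpolyS A n -> Prop)
  : ('I_n -> B) -> Prop :=
  fun P => forall f g, T (f, g) -> rho (mpeval iota f P) (mpeval iota g P).

Definition rho_variety (A B : comNzSemiRingType) (iota : A -> B) (n : nat)
  (rho : B -> B -> Prop) (V : ('I_n -> B) -> Prop) : Prop :=
  exists T : mpolyS A n * mpolyS A n -> Prop,
    (exists t, T t) /\ V = Zrho iota rho T.

Definition twist (S : comNzSemiRingType) (t1 t2 : S * S) : S * S :=
  (t1.1 * t2.1 + t1.2 * t2.2, t1.1 * t2.2 + t1.2 * t2.1).

Definition twistset (S : comNzSemiRingType) (T1 T2 : S * S -> Prop)
  : S * S -> Prop :=
  fun t => exists t1 t2, T1 t1 /\ T2 t2 /\ t = twist t1 t2.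

(* Evaluation at a point is a semiring morphism, so it commutes with the
   twisted product.  Hence if (f(P), g(P)) lies in the congruence rho, so does
   the evaluation of (f, g) * (f', g') for any (f', g'), rho being compatible
   with + and *.  A congruence containing (0, 1) is total (c = c * 1 ~ c * 0 = 0),
   so a proper one never relates 0 and 1.  The intersection of varieties
   Z_rho(T_i) is Z_rho of the union of the T_i. *)
From mathcomp Require Import all_boot all_order all_algebra.
From Stdlib Require Import FunctionalExtensionality PropExtensionality.
Import GRing.Theory.
Set Implicit Arguments.
Unset Strict Implicit.
Unset Printing Implicit Defensive.
Local Open Scope ring_scope.

Section Evaluation.
Variables (A B : comNzSemiRingType) (iota : {rmorphism A -> B}) (P : nat -> B).

Fixpoint evalN_rmorph (k : nat) : {rmorphism mpolyS A k -> B} :=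
  match k return {rmorphism mpolyS A k -> B} with
  | 0 => iota
  | k'.+1 =>
      horner_morph (fun x : mpolyS A k' => mulrC (P k') (evalN_rmorph k' x))
  end.

Lemma evalNE k (p : mpolyS A k) : evalN iota p P = evalN_rmorph k p.
Proof.
elim: k p => [//|k IH] p /=.
rewrite /horner_morph (@horner_coef_wide _ (size (p : {poly mpolyS A k}))).
  by apply: eq_bigr => i _; rewrite coef_map IH.
by rewrite map_polyE (leq_trans (size_Poly _)) ?size_map.
Qed.

End Evaluation.

Section PointEvaluation.
Variables (A B : comNzSemiRingType) (iota : {rmorphism A -> B}) (n : nat).
Variable P : 'I_n -> B.

Lemma mpeval0 : mpeval iota (0 : mpolyS A n) P = 0.
Proof. by rewrite /mpeval evalNE rmorph0. Qed.

Lemma mpeval1 : mpeval iota (1 : mpolyS A n) P = 1.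
Proof. by rewrite /mpeval evalNE rmorph1. Qed.

Lemma mpevalD (f g : mpolyS A n) :
  mpeval iota (f + g) P = mpeval iota f P + mpeval iota g P.
Proof. by rewrite /mpeval !evalNE rmorphD. Qed.

Lemma mpevalM (f g : mpolyS A n) :
  mpeval iota (f * g) P = mpeval iota f P * mpeval iota g P.
Proof. by rewrite /mpeval !evalNE rmorphM. Qed.

End PointEvaluation.

Section Congruence.
Variables (B : comNzSemiRingType) (rho : B -> B -> Prop).
Hypothesis rho_cong : congruence rho.

Lemma congruence_total_of_01 : rho 0 1 -> forall a b, rho a b.
Proof.
case: rho_cong => rr rs rt _ rM r01.
have r0 c : rho 0 c by have := rM c c 0 1 (rr c) r01; rewrite mulr0 mulr1.
by move=> a b; apply: rt (rs _ _ (r0 a)) (r0 b).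
Qed.

Lemma congruence_twistl a b c d : rho a b -> rho (a * c + b * d) (a * d + b * c).
Proof.
case: rho_cong => rr rs _ rD rM rab.
by rewrite [X in rho _ X]addrC; apply: rD; apply: rM => //; apply: rs.
Qed.

Lemma congruence_twistr a b c d : rho c d -> rho (a * c + b * d) (a * d + b * c).
Proof.
move=> rcd; have := congruence_twistl a b rcd.
by rewrite [c * b + _]addrC !(mulrC c) !(mulrC d).
Qed.

End Congruence.

Section Varieties.
Variables (A B : comNzSemiRingType) (iota : {rmorphism A -> B}) (n : nat).
Variable rho : B -> B -> Prop.
Hypothesis rho_cong : congruence rho.
Local Notation S := (mpolyS A n).

Lemma Zrho01_empty : (exists a b, ~ rho a b) ->
  forall P, ~ Zrho iota rho (fun t : S * S => t = (0, 1)) P.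
Proof.
move=> [a [b nrab]] P Z01; apply: nrab; apply: (congruence_total_of_01 rho_cong).
by have := Z01 0 1 erefl; rewrite mpeval0 mpeval1.
Qed.

Lemma Zrho_diag (f : S) P : Zrho iota rho (fun t : S * S => t = (f, f)) P.
Proof. by case: rho_cong => rr _ _ _ _ g h [-> ->]. Qed.

Lemma Zrho_twistset (T1 T2 : S * S -> Prop) P :
  Zrho iota rho T1 P \/ Zrho iota rho T2 P -> Zrho iota rho (twistset T1 T2) P.
Proof.
move=> Z12 f g [[f1 g1] [[f2 g2] [T1fg1 [T2fg2 [-> ->]]]]].
rewrite !mpevalD !mpevalM.
case: Z12 => [Z1|Z2].
- exact/(congruence_twistl rho_cong)/Z1.
- exact/(congruence_twistr rho_cong)/Z2.
Qed.

Lemma rho_variety_bigcap (I : Type) (V : I -> ('I_n -> B) -> Prop) :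
  (forall i, rho_variety iota rho (V i)) ->
  rho_variety iota rho (fun P => forall i, V i P).
Proof.
move=> varV.
(* (0, 0) holds at every point and keeps the system non-empty when I is. *)
pose T t := t = (0, 0) \/
  exists i (Ti : S * S -> Prop), V i = Zrho iota rho Ti /\ Ti t.
exists T; split; first by exists (0, 0); left.
apply: functional_extensionality => P; apply: propositional_extensionality.
case: rho_cong => rr _ _ _ _; split.
- move=> VP f g [[-> ->]|[i [Ti [defVi Tifg]]]]; first exact: rr.
  by have := VP i; rewrite defVi; apply.
- move=> ZP i; have [Ti [_ defVi]] := varV i; rewrite defVi => f g Tifg.
  by apply: ZP; right; exists i, Ti.
Qed.

End Varieties.

Theorem lemma3p3 (A B : comNzSemiRingType) (iota : {rmorphism A -> B})
  (iota_inj : injective iota) (n : nat) (rho : B -> B -> Prop)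
  (rho_cong : congruence rho) (rho_proper : exists a b : B, ~ rho a b) :
  (* (1) *)
  ((forall P : 'I_n -> B,
      ~ Zrho iota rho (fun t : mpolyS A n * mpolyS A n => t = (0, 1)) P) /\
   (forall (f : mpolyS A n) (P : 'I_n -> B),
      Zrho iota rho (fun t : mpolyS A n * mpolyS A n => t = (f, f)) P)) /\
  (* (2) *)
  (forall T1 T2 : mpolyS A n * mpolyS A n -> Prop,
      (exists t, T1 t) -> (exists t, T2 t) ->
      forall P : 'I_n -> B,
        Zrho iota rho T1 P \/ Zrho iota rho T2 P ->
        Zrho iota rho (twistset T1 T2) P) /\
  (* (3) *)
  (forall (I : Type) (V : I -> ('I_n -> B) -> Prop),
      (forall i, rho_variety iota rho (V i)) ->
      rho_variety iota rho (fun P => forall i, V i P)).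
Proof.
split; [split|split].
- exact: Zrho01_empty.
- exact: Zrho_diag.
- by move=> T1 T2 _ _; apply: Zrho_twistset.
- exact: rho_variety_bigcap.
Qed.
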